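(* Let $Y(y)=\int^y\frac{e^{3/(2s)}}{|s|^{3/2}}\,ds$ be a fixed antiderivative on an open interval not containing $0$, and for $\kappa\in\mathbb R\setminus\{0\}$ let $g[\kappa]=\kappa\,(Y(y)+x)\,dx\,dy$. If $\kappa,\tilde\kappa\in\mathbb R\setminus\{0\}$ and there is a local diffeomorphism $\phi$ between open subsets of the domain with $\phi^*g[\tilde\kappa]=g[\kappa]$, then $\kappa=\tilde\kappa$.
   Context: $dx\,dy$ denotes the symmetric product $\tfrac12(dx\otimes dy+dy\otimes dx)$. *)

From Stdlib Require Import Reals.
Open Scope R_scope.

Definition open2 (U : R -> R -> Prop) : Prop :=
  forall x y, U x y -> exists r, 0 < r /\
    forall x' y', Rabs (x' - x) < r -> Rabs (y' - y) < r -> U x' y'.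

Definition open1 (I : R -> Prop) : Prop :=
  forall y, I y -> exists r, 0 < r /\ forall y', Rabs (y' - y) < r -> I y'.

Definition open_interval_without_0 (I : R -> Prop) : Prop :=
  open1 I /\ (exists y, I y) /\
  (forall a b c, I a -> I c -> a <= b -> b <= c -> I b) /\ ~ I 0.

Definition continuous2_at (f : R -> R -> R) (x y : R) : Prop :=
  forall eps, 0 < eps -> exists delta, 0 < delta /\
    forall x' y', Rabs (x' - x) < delta -> Rabs (y' - y) < delta ->
      Rabs (f x' y' - f x y) < eps.

Fixpoint Ck (n : nat) (U : R -> R -> Prop) (f : R -> R -> R) : Prop :=
  match n with
  | O => forall x y, U x y -> continuous2_at f x y
  | S m => exists fx fy : R -> R -> R,
      (forall x y, U x y ->
         derivable_pt_lim (fun t => f t y) x (fx x y) /\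
         derivable_pt_lim (fun t => f x t) y (fy x y)) /\
      Ck m U fx /\ Ck m U fy
  end.

Definition smooth_on (U : R -> R -> Prop) (f : R -> R -> R) : Prop :=
  forall n, Ck n U f.

Definition integrand (s : R) : R := exp (3 / (2 * s)) / Rpower (Rabs s) (3 / 2).

(* Domain of the metric g[kappa] = kappa (Y(y)+x) dx dy: y in I, and
   nondegeneracy Y(y)+x <> 0. *)
Definition dom (I : R -> Prop) (Y : R -> R) (x y : R) : Prop :=
  I y /\ Y y + x <> 0.

(* g[kappa] at the point (x,y), evaluated on tangent vectors u v, with
   dx dy = 1/2 (dx (x) dy + dy (x) dx). *)
Definition gk (Y : R -> R) (k x y : R) (u v : R * R) : R :=
  k * (Y y + x) * ((fst u * snd v + snd u * fst v) / 2).

Definition jac_apply (a b c d : R) (u : R * R) : R * R :=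
  (a * fst u + b * snd u, c * fst u + d * snd u).

(* Pulling back [dx dy] by a map with Jacobian [[a b] [c d]] gives
   [a c dx^2 + (a d + b c) dx dy + b d dy^2], so [a c = b d = 0].  As the Jacobian is invertible
   and continuous, near a point either [b = c = 0] or [a = d = 0]: the map is [(f x, h y)] or
   [(f y, h x)], and the [dx dy] coefficient becomes a functional equation in separated variables.

   In the diagonal case, comparing the equation at two values of y shows that h' is constant
   (otherwise a conservation law for f forces a cubic to vanish identically), then that f' is a
   constant a; hence [k = kt a^2 h'] and [Y (h y) = a Y y + const].  Differentiating,
   [h' I (h y) = a I y] for the integrand [I], and comparing [I^2 = e^(3/y) / |y|^3] on both sides
   leaves only [h = id], [a = 1].

   In the antidiagonal case the same comparison in x shows that [I y^2 (alpha y + beta)^3] is a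
   nonzero constant, which is impossible: differentiating [e^(3/y) (alpha y + beta)^3 = K y^3]
   yields [(alpha + beta) y + beta = 0]. *)

From Stdlib Require Import Reals Lra.
From Coquelicot Require Import Coquelicot.
Open Scope R_scope.

Lemma ex_derive_Derive_of_lim f x l :
  derivable_pt_lim f x l -> ex_derive f x /\ Derive (fun t => f t) x = l.
Proof.
  intros H%is_derive_Reals. split; [exists l; exact H | exact (is_derive_unique f x l H)].
Qed.

Lemma Rabs_lt_shrink c r y t :
  Rabs (y - c) < r -> Rabs (t - y) < r - Rabs (y - c) -> Rabs (t - c) < r.
Proof.
  intros Hy Ht. replace (t - c) with ((t - y) + (y - c)) by ring.
  eapply Rle_lt_trans; [apply Rabs_triang | lra].
Qed.

Lemma Rabs_center_lt c r : 0 < r -> Rabs (c - c) < r.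
Proof. intros; rewrite Rminus_diag, Rabs_R0; lra. Qed.

Lemma Rabs_center_shift_lt c r e : 0 <= e < r -> Rabs (c + e - c) < r.
Proof. intros; replace (c + e - c) with e by ring; rewrite Rabs_right; lra. Qed.

Section Ball.

Variables c r : R.

Lemma derivable_pt_lim_ext_ball f g y l :
  Rabs (y - c) < r -> (forall t, Rabs (t - c) < r -> f t = g t) ->
  derivable_pt_lim f y l -> derivable_pt_lim g y l.
Proof.
  intros Hy Hfg Hf%is_derive_Reals. apply is_derive_Reals.
  apply (is_derive_ext_loc f); [|exact Hf].
  assert (Hd : 0 < r - Rabs (y - c)) by lra.
  exists (mkposreal _ Hd). intros t Ht. apply Hfg, (Rabs_lt_shrink c r y); auto.
Qed.

Lemma derivable_pt_lim_unique_ball f g y lf lg :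
  Rabs (y - c) < r -> (forall t, Rabs (t - c) < r -> f t = g t) ->
  derivable_pt_lim f y lf -> derivable_pt_lim g y lg -> lf = lg.
Proof.
  intros Hy Hfg Hf Hg. apply (uniqueness_limite g y); auto.
  exact (derivable_pt_lim_ext_ball f g y lf Hy Hfg Hf).
Qed.

Lemma derivable_pt_lim_const_ball G K y D :
  Rabs (y - c) < r -> (forall t, Rabs (t - c) < r -> G t = K) ->
  derivable_pt_lim G y D -> D = 0.
Proof.
  intros Hy HG HD. apply (derivable_pt_lim_unique_ball G (fun _ => K) y); auto.
  apply derivable_pt_lim_const.
Qed.

Lemma MVT_ball g g' s t :
  (forall u, Rabs (u - c) < r -> derivable_pt_lim g u (g' u)) ->
  Rabs (s - c) < r -> Rabs (t - c) < r -> s < t ->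
  exists u, g t - g s = g' u * (t - s) /\ Rabs (u - c) < r.
Proof.
  intros Hd Hs%Rabs_def2 Ht%Rabs_def2 Hst.
  destruct (MVT_cor2 g g' s t Hst) as [u [Hu Hsu]].
  - intros u Hu. apply Hd, Rabs_def1; lra.
  - exists u. split; [exact Hu | apply Rabs_def1; lra].
Qed.

Lemma deriv_pos_injective_ball g g' s t :
  (forall u, Rabs (u - c) < r -> derivable_pt_lim g u (g' u)) ->
  (forall u, Rabs (u - c) < r -> 0 < g' u) ->
  Rabs (s - c) < r -> Rabs (t - c) < r -> s <> t -> g s <> g t.
Proof.
  intros Hd Hp Hs Ht Hst.
  destruct (Rtotal_order s t) as [Hlt | [Heq | Hgt]]; [| contradiction |].
  - destruct (MVT_ball g g' s t Hd Hs Ht Hlt) as [u [Hu Huc]].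
    specialize (Hp u Huc). nra.
  - destruct (MVT_ball g g' t s Hd Ht Hs Hgt) as [u [Hu Huc]].
    specialize (Hp u Huc). nra.
Qed.

Lemma affine_of_const_deriv_ball g a :
  0 < r -> (forall u, Rabs (u - c) < r -> derivable_pt_lim g u a) ->
  forall t, Rabs (t - c) < r -> g t = g c + a * (t - c).
Proof.
  intros Hr Hd t Ht.
  set (G := fun u => g u - a * u).
  assert (HG : forall u, Rabs (u - c) < r -> derivable_pt_lim G u 0).
  { intros u Hu. replace 0 with (a - a * 1) by ring.
    apply derivable_pt_lim_minus; [now apply Hd |].
    apply derivable_pt_lim_scal, derivable_pt_lim_id. }
  assert (Hc := Rabs_center_lt c r Hr).
  enough (G t = G c) by (unfold G in *; lra).
  destruct (Rtotal_order t c) as [Hlt | [-> | Hgt]]; [| reflexivity |].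
  - destruct (MVT_ball G (fun _ => 0) t c HG Ht Hc Hlt) as [u [Hu _]]. lra.
  - destruct (MVT_ball G (fun _ => 0) c t HG Hc Ht Hgt) as [u [Hu _]]. lra.
Qed.

Lemma const_of_zero_deriv_ball g :
  0 < r -> (forall u, Rabs (u - c) < r -> derivable_pt_lim g u 0) ->
  forall t, Rabs (t - c) < r -> g t = g c.
Proof.
  intros Hr Hd t Ht. rewrite (affine_of_const_deriv_ball g 0 Hr Hd t Ht). ring.
Qed.

Lemma sq_conservation_ball f f' p q m :
  0 < r -> (forall u, Rabs (u - c) < r -> derivable_pt_lim f u (f' u)) ->
  (forall u, Rabs (u - c) < r -> f' u * (p + q * f u) = m) ->
  forall t, Rabs (t - c) < r -> (p + q * f t) ^ 2 = (p + q * f c) ^ 2 + 2 * q * m * (t - c).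
Proof.
  intros Hr Hd Hm. apply (affine_of_const_deriv_ball (fun t => (p + q * f t) ^ 2)); auto.
  intros u Hu. destruct (ex_derive_Derive_of_lim f u (f' u) (Hd u Hu)) as [Hex HD].
  apply is_derive_Reals. auto_derive; [exact Hex |].
  rewrite HD, <- (Hm u Hu). ring.
Qed.

Lemma cubic_coeffs_zero_ball p3 p2 p1 p0 :
  0 < r -> (forall x, Rabs (x - c) < r -> p3 * x ^ 3 + p2 * x ^ 2 + p1 * x + p0 = 0) ->
  p3 = 0 /\ p2 = 0 /\ p1 = 0 /\ p0 = 0.
Proof.
  intros Hr H. set (P := fun x => p3 * x ^ 3 + p2 * x ^ 2 + p1 * x + p0).
  set (e := r / 4). assert (He : 0 < e) by (unfold e; lra).
  assert (H0 : P c = 0) by exact (H c (Rabs_center_lt c r Hr)).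
  assert (H1 : P (c + e) = 0) by (apply H, Rabs_center_shift_lt; unfold e; lra).
  assert (H2 : P (c + 2 * e) = 0) by (apply H, Rabs_center_shift_lt; unfold e; lra).
  assert (H3 : P (c + 3 * e) = 0) by (apply H, Rabs_center_shift_lt; unfold e; lra).
  (* finite differences of orders 3, 2, 1 isolate the coefficients one at a time *)
  assert (Hp3 : p3 = 0).
  { assert (D : 6 * p3 * e ^ 3 = P (c + 3 * e) - 3 * P (c + 2 * e) + 3 * P (c + e) - P c)
      by (unfold P; ring).
    rewrite H0, H1, H2, H3 in D. assert (0 < e ^ 3) by (apply pow_lt; lra). nra. }
  assert (Hp2 : p2 = 0).
  { assert (D : 2 * p2 * e ^ 2 = P (c + 2 * e) - 2 * P (c + e) + P c)
      by (unfold P; rewrite Hp3; ring).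
    rewrite H0, H1, H2 in D. assert (0 < e ^ 2) by (apply pow_lt; lra). nra. }
  assert (Hp1 : p1 = 0).
  { assert (D : p1 * e = P (c + e) - P c) by (unfold P; rewrite Hp3, Hp2; ring).
    rewrite H0, H1 in D. nra. }
  repeat split; auto. unfold P in H0. rewrite Hp3, Hp2, Hp1 in H0. lra.
Qed.

Lemma affine_mul_sq_affine_const_ball al be ga de K :
  0 < r -> (forall x, Rabs (x - c) < r -> (al * x + be) * (ga * x + de) ^ 2 = K) ->
  al * ga ^ 2 = 0.
Proof.
  intros Hr H.
  destruct (cubic_coeffs_zero_ball (al * ga ^ 2) (2 * al * ga * de + be * ga ^ 2)
              (al * de ^ 2 + 2 * be * ga * de) (be * de ^ 2 - K) Hr) as [H3 _]; [| exact H3].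
  intros x Hx. rewrite <- (H x Hx). ring.
Qed.

End Ball.

Section ExpIdentities.

Variables c r : R.
Hypothesis Hr : 0 < r.
Hypothesis Hball_nz : forall y, Rabs (y - c) < r -> y <> 0.

Lemma exp_inv_mul_affine_cube_not_cube A C K :
  K <> 0 -> ~ (forall y, Rabs (y - c) < r -> exp (3 / y) * (A * y + C) ^ 3 = K * y ^ 3).
Proof.
  intros HK H.
  assert (Hlin : forall y, Rabs (y - c) < r -> (A + C) * y + C = 0).
  { intros y Hy. assert (Hy0 := Hball_nz y Hy).
    set (D := exp (3 / y) * (-3 / y ^ 2) * (A * y + C) ^ 3
              + 3 * A * exp (3 / y) * (A * y + C) ^ 2 - 3 * K * y ^ 2).
    assert (HD : D = 0).
    { apply (derivable_pt_lim_const_ball c r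
        (fun t => exp (3 / t) * (A * t + C) ^ 3 - K * t ^ 3) 0 y D Hy).
      - intros t Ht. rewrite (H t Ht). ring.
      - apply is_derive_Reals. unfold D. auto_derive; [auto | unfold Rdiv; field; auto]. }
    assert (Hid : D * (y ^ 2 * (A * y + C))
                  = -3 * (exp (3 / y) * (A * y + C) ^ 3) * (A * y + C)
                    + 3 * A * y ^ 2 * (exp (3 / y) * (A * y + C) ^ 3)
                    - 3 * K * y ^ 4 * (A * y + C)) by (unfold D; field; auto).
    rewrite HD, Rmult_0_l, (H y Hy) in Hid.
    assert (Hnz : -3 * K * y ^ 3 <> 0).
    { assert (y ^ 3 <> 0) by (apply pow_nonzero; auto).
      repeat apply Rmult_integral_contrapositive_currified; auto; lra. }
    apply (Rmult_eq_reg_l (-3 * K * y ^ 3)); auto. rewrite Rmult_0_r, Hid. ring. }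
  destruct (cubic_coeffs_zero_ball c r 0 0 (A + C) C Hr) as [_ [_ [HAC HC]]].
  { intros y Hy. specialize (Hlin y Hy). nra. }
  assert (Hc := H c (Rabs_center_lt c r Hr)).
  replace (A * c + C) with 0 in Hc by (replace A with (- C) by lra; rewrite HC; ring).
  apply (Rmult_integral_contrapositive_currified K (c ^ 3) HK).
  - apply pow_nonzero, Hball_nz, Rabs_center_lt; exact Hr.
  - rewrite <- Hc. ring.
Qed.

Lemma exp_inv_affine_rescaling a B g :
  a <> 0 -> B <> 0 -> (forall y, Rabs (y - c) < r -> B * y + g <> 0) ->
  (forall y, Rabs (y - c) < r ->
     a ^ 2 * exp (3 / y) * (B * y + g) ^ 3 = B ^ 2 * exp (3 / (B * y + g)) * y ^ 3) ->
  B = 1 /\ g = 0.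
Proof.
  intros Ha HB Hu H.
  assert (Hquad : forall y, Rabs (y - c) < r ->
            (B - B ^ 2 - B * g) * y ^ 2 - (2 * B * g + g ^ 2) * y - g ^ 2 = 0).
  { intros y Hy. assert (Hy0 := Hball_nz y Hy). assert (Hu0 := Hu y Hy).
    set (W := a ^ 2 * exp (3 / y) * (B * y + g) ^ 3).
    set (D := a ^ 2 * exp (3 / y) * (-3 / y ^ 2) * (B * y + g) ^ 3
              + a ^ 2 * exp (3 / y) * (3 * B * (B * y + g) ^ 2)
              - B ^ 2 * exp (3 / (B * y + g)) * (-3 * B / (B * y + g) ^ 2) * y ^ 3
              - B ^ 2 * exp (3 / (B * y + g)) * (3 * y ^ 2)).
    assert (HD : D = 0).
    { apply (derivable_pt_lim_const_ball c r (fun t => a ^ 2 * exp (3 / t) * (B * t + g) ^ 3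
               - B ^ 2 * exp (3 / (B * t + g)) * t ^ 3) 0 y D Hy).
      - intros t Ht. rewrite (H t Ht). ring.
      - apply is_derive_Reals. unfold D. auto_derive; [auto | unfold Rdiv; field; auto]. }
    assert (Hid : D * (y ^ 2 * (B * y + g) ^ 2)
        = 3 * W * ((B - B ^ 2 - B * g) * y ^ 2 - (2 * B * g + g ^ 2) * y - g ^ 2)).
    { transitivity (-3 * W * (B * y + g) ^ 2 + 3 * B * y ^ 2 * (B * y + g) * W
        + 3 * B * y ^ 2 * (B ^ 2 * exp (3 / (B * y + g)) * y ^ 3)
        - 3 * y * (B * y + g) ^ 2 * (B ^ 2 * exp (3 / (B * y + g)) * y ^ 3)).
      - unfold D, W. field. auto.
      - rewrite <- (H y Hy). fold W. ring. }
    assert (HW : 3 * W <> 0).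
    { unfold W. assert (0 < exp (3 / y)) by apply exp_pos.
      repeat apply Rmult_integral_contrapositive_currified; try lra;
        apply pow_nonzero; auto. }
    apply (Rmult_eq_reg_l (3 * W)); auto. rewrite Rmult_0_r, <- Hid, HD. ring. }
  destruct (cubic_coeffs_zero_ball c r 0 (B - B ^ 2 - B * g) (- (2 * B * g + g ^ 2)) (- g ^ 2) Hr)
    as [_ [H2 [_ H0]]].
  { intros y Hy. specialize (Hquad y Hy). nra. }
  assert (Hg : g = 0) by nra. subst g.
  split; [| reflexivity].
  apply (Rmult_eq_reg_l B); auto. nra.
Qed.

End ExpIdentities.

Lemma integrand_pos s : 0 < integrand s.
Proof. unfold integrand, Rpower. apply Rdiv_lt_0_compat; apply exp_pos. Qed.

Lemma integrand_sq_mul_Rabs_cube s : s <> 0 -> integrand s ^ 2 * Rabs s ^ 3 = exp (3 / s).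
Proof.
  intro Hs. assert (Ha : 0 < Rabs s) by (apply Rabs_pos_lt; auto).
  assert (Hp : Rpower (Rabs s) (3 / 2) ^ 2 = Rabs s ^ 3).
  { rewrite <- (Rpower_pow 3 (Rabs s) Ha). simpl.
    rewrite Rmult_1_r, <- Rpower_plus. f_equal. lra. }
  assert (He : exp (3 / (2 * s)) ^ 2 = exp (3 / s)).
  { simpl. rewrite Rmult_1_r, <- exp_plus. f_equal. field. auto. }
  assert (0 < Rpower (Rabs s) (3 / 2)) by (unfold Rpower; apply exp_pos).
  unfold integrand, Rdiv at 1. rewrite Rpow_mult_distr, He, <- Hp, pow_inv. field. lra.
Qed.

Section Interval.

Variable I : R -> Prop.
Hypothesis HI : open_interval_without_0 I.

Lemma interval_nonzero y : I y -> y <> 0.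
Proof. intros Hy ->. destruct HI as [_ [_ [_ H0]]]. auto. Qed.

Lemma interval_sign : exists sg, (sg = 1 \/ sg = -1) /\ forall y, I y -> Rabs y = sg * y.
Proof.
  destruct HI as [_ [[y0 Hy0] [Hconv H0]]].
  assert (Hy0nz := interval_nonzero y0 Hy0).
  destruct (Rlt_or_le 0 y0) as [Hpos | Hneg].
  - exists 1. split; [auto |]. intros y Hy. rewrite Rmult_1_l. apply Rabs_right.
    destruct (Rlt_or_le y 0); [| lra]. exfalso. apply H0, (Hconv y 0 y0); auto; lra.
  - exists (-1). split; [auto |]. intros y Hy.
    assert (y <> 0) by (apply interval_nonzero; auto).
    rewrite Rabs_left; [ring |].
    destruct (Rlt_or_le 0 y); [| lra]. exfalso. apply H0, (Hconv y0 0 y); auto; lra.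
Qed.

Lemma integrand_sq_mul_affine_cube_not_const c r A C K :
  0 < r -> (forall y, Rabs (y - c) < r -> I y) -> K <> 0 ->
  ~ (forall y, Rabs (y - c) < r -> integrand y ^ 2 * (A * y + C) ^ 3 = K).
Proof.
  intros Hr HIb HK H. destruct interval_sign as [sg [Hsg Habs]].
  apply (exp_inv_mul_affine_cube_not_cube c r Hr (fun y Hy => interval_nonzero y (HIb y Hy))
           A C (K * sg)).
  - apply Rmult_integral_contrapositive_currified; [auto | lra].
  - intros y Hy. rewrite <- (integrand_sq_mul_Rabs_cube y (interval_nonzero y (HIb y Hy))).
    rewrite (Habs y (HIb y Hy)).
    replace (K * sg * y ^ 3) with (K * (sg ^ 3 * y ^ 3))
      by (destruct Hsg; subst; ring).
    rewrite <- (H y Hy). ring.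
Qed.

Lemma integrand_affine_rescaling c r a B g :
  0 < r -> B <> 0 -> (forall y, Rabs (y - c) < r -> I y /\ I (B * y + g)) ->
  (forall y, Rabs (y - c) < r -> B * integrand (B * y + g) = a * integrand y) ->
  B = 1 /\ g = 0 /\ a = 1.
Proof.
  intros Hr HB HIb H. destruct interval_sign as [sg [Hsg Habs]].
  assert (Hc := Rabs_center_lt c r Hr).
  assert (Ha : a <> 0).
  { intros ->. specialize (H c Hc). rewrite Rmult_0_l in H.
    apply Rmult_integral in H as [H | H]; [auto | pose proof (integrand_pos (B * c + g)); lra]. }
  assert (Hnz : forall y, Rabs (y - c) < r -> y <> 0 /\ B * y + g <> 0)
    by (intros y Hy; split; apply interval_nonzero, HIb; auto).
  destruct (exp_inv_affine_rescaling c r Hr (fun y Hy => proj1 (Hnz y Hy)) a B g Ha HB)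
    as [HB1 Hg0].
  - intros y Hy. apply Hnz; auto.
  - intros y Hy. destruct (Hnz y Hy) as [Hy0 Hu0]. destruct (HIb y Hy) as [HIy HIu].
    rewrite <- (integrand_sq_mul_Rabs_cube y Hy0), <- (integrand_sq_mul_Rabs_cube _ Hu0).
    rewrite (Habs y HIy), (Habs _ HIu).
    transitivity ((a * integrand y) ^ 2 * sg ^ 3 * (y * (B * y + g)) ^ 3); [ring |].
    rewrite <- (H y Hy). ring.
  - subst. repeat split. specialize (H c Hc).
    replace (1 * c + 0) with c in H by ring.
    pose proof (integrand_pos c). nra.
Qed.

End Interval.

(* Near (x0, y0) the map is (f x, h y) with f' = A and h' = B; [HE] is the [dx dy] coefficient
   of the pullback identity. *)
Section Diagonal.

Variables (I : R -> Prop) (Y : R -> R) (k kt x0 y0 r : R) (f A h B : R -> R).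
Hypothesis HI : open_interval_without_0 I.
Hypothesis HY : forall s, I s -> derivable_pt_lim Y s (integrand s).
Hypotheses (hk : k <> 0) (hkt : kt <> 0) (Hr : 0 < r).
Hypothesis Hf : forall x, Rabs (x - x0) < r -> derivable_pt_lim f x (A x).
Hypothesis Hh : forall y, Rabs (y - y0) < r -> derivable_pt_lim h y (B y).
Hypothesis HIy : forall y, Rabs (y - y0) < r -> I y /\ I (h y).
Hypothesis HE : forall x y, Rabs (x - x0) < r -> Rabs (y - y0) < r ->
  kt * (Y (h y) + f x) * (A x * B y) = k * (Y y + x).

Let Hx0 := Rabs_center_lt x0 r Hr.
Let Hy0 := Rabs_center_lt y0 r Hr.

Lemma diag_Y_injective y : Rabs (y - y0) < r -> y <> y0 -> Y y0 - Y y <> 0.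
Proof.
  intros Hy Hne E. refine (deriv_pos_injective_ball y0 r Y integrand y0 y _ _ Hy0 Hy _ _).
  - intros u Hu. apply HY, HIy, Hu.
  - intros u _. apply integrand_pos.
  - auto.
  - lra.
Qed.

Lemma diag_difference y x : Rabs (y - y0) < r -> Rabs (x - x0) < r ->
  A x * ((B y0 * Y (h y0) - B y * Y (h y)) + (B y0 - B y) * f x) = k * (Y y0 - Y y) / kt.
Proof.
  intros Hy Hx. apply (Rmult_eq_reg_l kt); auto.
  replace (kt * (k * (Y y0 - Y y) / kt)) with (k * (Y y0 + x) - k * (Y y + x)) by (field; auto).
  rewrite <- (HE x y0 Hx Hy0), <- (HE x y Hx Hy). ring.
Qed.

Lemma diag_h_deriv_const y : Rabs (y - y0) < r -> B y = B y0.
Proof.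
  intros Hy. destruct (Req_dec y y0) as [-> | Hne]; [reflexivity |].
  set (p := B y0 * Y (h y0) - B y * Y (h y)). set (q := B y0 - B y).
  set (m := k * (Y y0 - Y y) / kt).
  assert (Hm : m <> 0).
  { unfold m, Rdiv. repeat apply Rmult_integral_contrapositive_currified; auto.
    - apply diag_Y_injective; auto.
    - apply Rinv_neq_0_compat; auto. }
  destruct (Req_dec q 0) as [Hq | Hq]; [unfold q in Hq; lra | exfalso].
  assert (Hdiff : forall x, Rabs (x - x0) < r -> A x * (p + q * f x) = m)
    by exact (fun x Hx => diag_difference y x Hy Hx).
  assert (Hcons := sq_conservation_ball x0 r f A p q m Hr Hf Hdiff).
  clearbody p q m.
  (* multiplying [HE x y0] by [q (p + q f x)] shows that [p + q f x] times an affine function of x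
     is constant; squaring it against the conservation law gives a cubic with leading
     coefficient [2 q m (k q)^2] *)
  assert (Hkey : forall x, Rabs (x - x0) < r ->
            (p + q * f x) * (k * q * x + (k * q * Y y0 - kt * B y0 * m))
            = kt * B y0 * m * (q * Y (h y0) - p)).
  { intros x Hx.
    transitivity (q * (p + q * f x) * (kt * (Y (h y0) + f x) * (A x * B y0))
                  - (p + q * f x) * kt * B y0 * m).
    - rewrite (HE x y0 Hx Hy0). ring.
    - rewrite <- (Hdiff x Hx). ring. }
  assert (Hc := affine_mul_sq_affine_const_ball x0 r (2 * q * m)
                  ((p + q * f x0) ^ 2 - 2 * q * m * x0) (k * q) (k * q * Y y0 - kt * B y0 * m)
                  ((kt * B y0 * m * (q * Y (h y0) - p)) ^ 2) Hr).
  assert (Hnz : 2 * q * m * (k * q) ^ 2 <> 0).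
  { assert ((k * q) ^ 2 <> 0)
      by (apply pow_nonzero, Rmult_integral_contrapositive_currified; auto).
    repeat apply Rmult_integral_contrapositive_currified; auto; lra. }
  apply Hnz, Hc. intros x Hx. rewrite <- (Hkey x Hx).
  transitivity ((p + q * f x) ^ 2 * (k * q * x + (k * q * Y y0 - kt * B y0 * m)) ^ 2); [| ring].
  rewrite (Hcons x Hx). ring.
Qed.

Lemma diag_derivs_const :
  B y0 <> 0 /\ A x0 <> 0 /\ forall x, Rabs (x - x0) < r -> A x = A x0.
Proof.
  set (y1 := y0 + r / 2).
  assert (Hy1 : Rabs (y1 - y0) < r) by (apply Rabs_center_shift_lt; lra).
  assert (Hm : k * (Y y0 - Y y1) / kt <> 0).
  { unfold Rdiv. repeat apply Rmult_integral_contrapositive_currified; auto.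
    - apply diag_Y_injective; auto. unfold y1. lra.
    - apply Rinv_neq_0_compat; auto. }
  assert (Hd : forall x, Rabs (x - x0) < r ->
            A x * (B y0 * (Y (h y0) - Y (h y1))) = k * (Y y0 - Y y1) / kt).
  { intros x Hx. rewrite <- (diag_difference y1 x Hy1 Hx), (diag_h_deriv_const y1 Hy1). ring. }
  assert (H0 := Hd x0 Hx0).
  assert (HA0 : A x0 * (B y0 * (Y (h y0) - Y (h y1))) <> 0) by (rewrite H0; exact Hm).
  split; [| split].
  - intros E. apply HA0. rewrite E. ring.
  - intros E. apply HA0. rewrite E. ring.
  - intros x Hx. apply (Rmult_eq_reg_r (B y0 * (Y (h y0) - Y (h y1)))).
    + rewrite (Hd x Hx). symmetry. exact H0.
    + intros E. apply HA0. rewrite E. ring.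
Qed.

Lemma diag_k_eq_scaled : k = kt * A x0 ^ 2 * B y0.
Proof.
  destruct diag_derivs_const as [_ [_ HAc]].
  assert (Haff : forall x, Rabs (x - x0) < r -> f x = f x0 + A x0 * (x - x0)).
  { apply affine_of_const_deriv_ball; auto. intros u Hu. rewrite <- (HAc u Hu). auto. }
  destruct (cubic_coeffs_zero_ball x0 r 0 0 (kt * A x0 ^ 2 * B y0 - k)
              (kt * (Y (h y0) + f x0 - A x0 * x0) * (A x0 * B y0) - k * Y y0) Hr)
    as [_ [_ [H1 _]]]; [| lra].
  intros x Hx. assert (E := HE x y0 Hx Hy0). rewrite (Haff x Hx), (HAc x Hx) in E. nra.
Qed.

Lemma diag_h_affine y : Rabs (y - y0) < r -> h y = B y0 * y + (h y0 - B y0 * y0).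
Proof.
  intros Hy. rewrite (affine_of_const_deriv_ball y0 r h (B y0) Hr); auto; [ring |].
  intros u Hu. rewrite <- (diag_h_deriv_const u Hu). auto.
Qed.

Lemma diag_integrand_rescaling y : Rabs (y - y0) < r ->
  B y0 * integrand (B y0 * y + (h y0 - B y0 * y0)) = A x0 * integrand y.
Proof.
  intros Hy. destruct diag_derivs_const as [HB0 [HA0 _]].
  assert (Haff := diag_h_affine).
  assert (HYh : forall t, Rabs (t - y0) < r ->
            Y (B y0 * t + (h y0 - B y0 * y0)) = A x0 * Y t + (A x0 * x0 - f x0)).
  { intros t Ht. rewrite <- (Haff t Ht).
    apply (Rmult_eq_reg_l (kt * A x0 * B y0));
      [| repeat apply Rmult_integral_contrapositive_currified; auto].
    transitivity (kt * (Y (h t) + f x0) * (A x0 * B t) - kt * f x0 * (A x0 * B y0)).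
    - rewrite (diag_h_deriv_const t Ht). ring.
    - rewrite (HE x0 t Hx0 Ht), diag_k_eq_scaled. ring. }
  rewrite Rmult_comm.
  apply (derivable_pt_lim_unique_ball y0 r _ _ y _ _ Hy HYh).
  - assert (Hlin : derivable_pt_lim (fun t => B y0 * t + (h y0 - B y0 * y0)) y (B y0))
      by (apply is_derive_Reals; auto_derive; [auto | ring]).
    refine (derivable_pt_lim_comp _ Y y _ _ Hlin _).
    apply HY. rewrite <- (Haff y Hy). apply HIy, Hy.
  - destruct (ex_derive_Derive_of_lim Y y _ (HY y (proj1 (HIy y Hy)))) as [Hex HD].
    apply is_derive_Reals. auto_derive; [exact Hex |]. rewrite HD. ring.
Qed.

Lemma diag_k_eq_kt : k = kt.
Proof.
  destruct diag_derivs_const as [HB0 _].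
  destruct (integrand_affine_rescaling I HI y0 r (A x0) (B y0) (h y0 - B y0 * y0) Hr HB0)
    as [HB1 [_ HA1]].
  - intros y Hy. rewrite <- (diag_h_affine y Hy). apply HIy, Hy.
  - exact diag_integrand_rescaling.
  - rewrite diag_k_eq_scaled, HB1, HA1. ring.
Qed.

End Diagonal.

(* Near (x0, y0) the map is (f y, h x) with f' = B; C plays the role of h', but neither h nor C
   needs any regularity for the contradiction. *)
Section Antidiagonal.

Variables (I : R -> Prop) (Y : R -> R) (k kt x0 y0 r : R) (f B h C : R -> R).
Hypothesis HI : open_interval_without_0 I.
Hypothesis HY : forall s, I s -> derivable_pt_lim Y s (integrand s).
Hypotheses (hk : k <> 0) (hkt : kt <> 0) (Hr : 0 < r).
Hypothesis Hf : forall y, Rabs (y - y0) < r -> derivable_pt_lim f y (B y).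
Hypothesis HIy : forall y, Rabs (y - y0) < r -> I y.
Hypothesis HE : forall x y, Rabs (x - x0) < r -> Rabs (y - y0) < r ->
  kt * (Y (h x) + f y) * (B y * C x) = k * (Y y + x).

Let Hx0 := Rabs_center_lt x0 r Hr.
Let Hy0 := Rabs_center_lt y0 r Hr.
Let x1 := x0 + r / 2.
Let Hx1 : Rabs (x1 - x0) < r := Rabs_center_shift_lt x0 r (r / 2) ltac:(lra).
Let p := C x0 * Y (h x0) - C x1 * Y (h x1).
Let q := C x0 - C x1.
Let m := k * (x0 - x1) / kt.

Lemma antidiag_m_nonzero : m <> 0.
Proof.
  unfold m, x1, Rdiv. repeat apply Rmult_integral_contrapositive_currified; auto.
  - lra.
  - apply Rinv_neq_0_compat; auto.
Qed.

Lemma antidiag_difference y : Rabs (y - y0) < r -> B y * (p + q * f y) = m.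
Proof.
  intros Hy. apply (Rmult_eq_reg_l kt); auto.
  replace (kt * m) with (k * (Y y + x0) - k * (Y y + x1)) by (unfold m; field; auto).
  rewrite <- (HE x0 y Hx0 Hy), <- (HE x1 y Hx1 Hy). unfold p, q. ring.
Qed.

Lemma antidiag_denominator_nonzero y : Rabs (y - y0) < r -> p + q * f y <> 0.
Proof.
  intros Hy E. apply antidiag_m_nonzero. rewrite <- (antidiag_difference y Hy), E. ring.
Qed.

Lemma antidiag_Y_frac y : Rabs (y - y0) < r ->
  Y y = kt * C x0 * m / k * ((Y (h x0) + f y) / (p + q * f y)) - x0.
Proof.
  intros Hy. assert (Hd := antidiag_denominator_nonzero y Hy).
  rewrite <- (antidiag_difference y Hy).
  apply (Rplus_eq_reg_r x0). apply (Rmult_eq_reg_l k); auto.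
  rewrite <- (HE x0 y Hx0 Hy). field. auto.
Qed.

(* Differentiating [antidiag_Y_frac] and using [antidiag_difference] once more. *)
Lemma antidiag_integrand_mul_cube y : Rabs (y - y0) < r ->
  integrand y * (p + q * f y) ^ 3 = kt * C x0 * m / k * (p - q * Y (h x0)) * m.
Proof.
  intros Hy. assert (Hd := antidiag_denominator_nonzero y Hy).
  set (c := kt * C x0 * m / k).
  assert (Hder : integrand y = c * (B y * (p - q * Y (h x0))) / (p + q * f y) ^ 2).
  { apply (derivable_pt_lim_unique_ball y0 r Y
             (fun t => c * ((Y (h x0) + f t) / (p + q * f t)) - x0) y _ _ Hy antidiag_Y_frac).
    - apply HY, HIy, Hy.
    - destruct (ex_derive_Derive_of_lim f y _ (Hf y Hy)) as [Hex HD].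
      apply is_derive_Reals. auto_derive; [auto |]. rewrite HD. field. auto. }
  rewrite Hder, <- (antidiag_difference y Hy). field. auto.
Qed.

Lemma antidiag_absurd : False.
Proof.
  set (K := kt * C x0 * m / k * (p - q * Y (h x0)) * m).
  assert (HK : K <> 0).
  { unfold K. rewrite <- (antidiag_integrand_mul_cube y0 Hy0).
    apply Rmult_integral_contrapositive_currified.
    - pose proof (integrand_pos y0). lra.
    - apply pow_nonzero, antidiag_denominator_nonzero, Hy0. }
  apply (integrand_sq_mul_affine_cube_not_const I HI y0 r (2 * q * m)
           ((p + q * f y0) ^ 2 - 2 * q * m * y0) (K ^ 2) Hr HIy (pow_nonzero _ 2 HK)).
  intros y Hy.
  unfold K. rewrite <- (antidiag_integrand_mul_cube y Hy).
  replace (2 * q * m * y + ((p + q * f y0) ^ 2 - 2 * q * m * y0)) with ((p + q * f y) ^ 2).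
  - ring.
  - rewrite (sq_conservation_ball y0 r f B p q m Hr Hf antidiag_difference y Hy). ring.
Qed.

End Antidiagonal.

Lemma gk_pullback_coeffs Y k kt x y X1 X2 a b c d :
  kt * (Y X2 + X1) <> 0 ->
  (forall u v, gk Y kt X1 X2 (jac_apply a b c d u) (jac_apply a b c d v) = gk Y k x y u v) ->
  (a * c = 0 /\ b * d = 0) /\ kt * (Y X2 + X1) * (a * d + b * c) = k * (Y y + x).
Proof.
  intros HW H.
  assert (Hxx := H (1, 0) (1, 0)). assert (Hyy := H (0, 1) (0, 1)).
  assert (Hxy := H (1, 0) (0, 1)).
  unfold gk, jac_apply in Hxx, Hyy, Hxy. simpl in Hxx, Hyy, Hxy.
  set (W := kt * (Y X2 + X1)) in *.
  split; [split |].
  - apply (Rmult_eq_reg_l W); auto. nra.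
  - apply (Rmult_eq_reg_l W); auto. nra.
  - nra.
Qed.

Definition nonzero_near (U : R -> R -> Prop) (g : R -> R -> R) (x y : R) : Prop :=
  exists d, 0 < d /\
    forall x' y', Rabs (x' - x) < d -> Rabs (y' - y) < d -> U x' y' -> g x' y' <> 0.

Lemma continuous2_nonzero_near U g x y :
  continuous2_at g x y -> g x y <> 0 -> nonzero_near U g x y.
Proof.
  intros Hc Hn. destruct (Hc (Rabs (g x y)) (Rabs_pos_lt _ Hn)) as [d [Hd H]].
  exists d. split; [exact Hd |]. intros x' y' H1 H2 _ E.
  specialize (H x' y' H1 H2). rewrite E, Rminus_0_l, Rabs_Ropp in H. lra.
Qed.

Lemma Ck1_partials_nonzero_near U phi dx dy x y :
  Ck 1 U phi ->
  (forall x y, U x y -> derivable_pt_lim (fun t => phi t y) x (dx x y) /\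
                       derivable_pt_lim (fun t => phi x t) y (dy x y)) ->
  U x y ->
  (dx x y <> 0 -> nonzero_near U dx x y) /\ (dy x y <> 0 -> nonzero_near U dy x y).
Proof.
  intros [fx [fy [Hfd [Hcx Hcy]]]] Hd HU.
  assert (Ex : forall x y, U x y -> fx x y = dx x y).
  { intros a b Hab. apply (uniqueness_limite (fun t => phi t b) a); [apply Hfd | apply Hd]; auto. }
  assert (Ey : forall x y, U x y -> fy x y = dy x y).
  { intros a b Hab. apply (uniqueness_limite (fun t => phi a t) b); [apply Hfd | apply Hd]; auto. }
  split; intros Hn.
  - rewrite <- Ex in Hn by exact HU.
    destruct (continuous2_nonzero_near U fx x y (Hcx x y HU) Hn) as [d [Hd0 Hnz]].
    exists d. split; [exact Hd0 |]. intros x' y' H1 H2 HU'. rewrite <- Ex by exact HU'. auto.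
  - rewrite <- Ey in Hn by exact HU.
    destruct (continuous2_nonzero_near U fy x y (Hcy x y HU) Hn) as [d [Hd0 Hnz]].
    exists d. split; [exact Hd0 |]. intros x' y' H1 H2 HU'. rewrite <- Ey by exact HU'. auto.
Qed.

Lemma nonzero_pair_square U P Q x0 y0 :
  open2 U -> U x0 y0 -> nonzero_near U P x0 y0 -> nonzero_near U Q x0 y0 ->
  exists r, 0 < r /\ forall x y, Rabs (x - x0) < r -> Rabs (y - y0) < r ->
    U x y /\ P x y <> 0 /\ Q x y <> 0.
Proof.
  intros HUo HU [dP [HdP HP]] [dQ [HdQ HQ]].
  destruct (HUo x0 y0 HU) as [dU [HdU HsqU]].
  exists (Rmin dU (Rmin dP dQ)). split; [repeat apply Rmin_glb_lt; auto |].
  intros x y Hx Hy.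
  assert (Hr := Rmin_l dU (Rmin dP dQ)). assert (Hr' := Rmin_r dU (Rmin dP dQ)).
  assert (HrP := Rmin_l dP dQ). assert (HrQ := Rmin_r dP dQ).
  assert (HUxy : U x y) by (apply HsqU; lra).
  repeat split; [exact HUxy | apply HP | apply HQ]; auto; lra.
Qed.

Lemma jacobian_diagonal_or_antidiagonal U phi1 phi2 d1x d1y d2x d2y x0 y0 :
  open2 U -> Ck 1 U phi1 -> Ck 1 U phi2 ->
  (forall x y, U x y -> derivable_pt_lim (fun t => phi1 t y) x (d1x x y) /\
                       derivable_pt_lim (fun t => phi1 x t) y (d1y x y)) ->
  (forall x y, U x y -> derivable_pt_lim (fun t => phi2 t y) x (d2x x y) /\
                       derivable_pt_lim (fun t => phi2 x t) y (d2y x y)) ->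
  (forall x y, U x y -> d1x x y * d2y x y - d1y x y * d2x x y <> 0) ->
  (forall x y, U x y -> d1x x y * d2x x y = 0 /\ d1y x y * d2y x y = 0) ->
  U x0 y0 ->
  exists r, 0 < r /\
    ((forall x y, Rabs (x - x0) < r -> Rabs (y - y0) < r ->
        U x y /\ d1y x y = 0 /\ d2x x y = 0) \/
     (forall x y, Rabs (x - x0) < r -> Rabs (y - y0) < r ->
        U x y /\ d1x x y = 0 /\ d2y x y = 0)).
Proof.
  intros HUo Hs1 Hs2 Hd1 Hd2 Hjac Hprod H0.
  destruct (Ck1_partials_nonzero_near U phi1 d1x d1y x0 y0 Hs1 Hd1 H0) as [N1x N1y].
  destruct (Ck1_partials_nonzero_near U phi2 d2x d2y x0 y0 Hs2 Hd2 H0) as [N2x N2y].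
  assert (Hj := Hjac x0 y0 H0). destruct (Hprod x0 y0 H0) as [Hac Hbd].
  assert (Hzero : forall a b, a * b = 0 -> b <> 0 -> a = 0)
    by (intros a b Hab Hb; destruct (Rmult_integral a b Hab); [auto | contradiction]).
  destruct (Req_dec (d1x x0 y0) 0) as [Ha | Ha].
  - rewrite Ha in Hj.
    assert (Hb : d1y x0 y0 <> 0) by (intros E; apply Hj; rewrite E; ring).
    assert (Hc : d2x x0 y0 <> 0) by (intros E; apply Hj; rewrite E; ring).
    destruct (nonzero_pair_square U d1y d2x x0 y0 HUo H0 (N1y Hb) (N2x Hc)) as [r [Hr Hsq]].
    exists r. split; [exact Hr | right]. intros x y Hx Hy.
    destruct (Hsq x y Hx Hy) as [HU [Hbxy Hcxy]]. destruct (Hprod x y HU) as [Hac' Hbd'].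
    rewrite Rmult_comm in Hbd'. repeat split; eauto.
  - assert (Hc : d2x x0 y0 = 0) by (rewrite Rmult_comm in Hac; apply (Hzero _ _ Hac); auto).
    rewrite Hc in Hj.
    assert (Hd : d2y x0 y0 <> 0) by (intros E; apply Hj; rewrite E; ring).
    destruct (nonzero_pair_square U d1x d2y x0 y0 HUo H0 (N1x Ha) (N2y Hd)) as [r [Hr Hsq]].
    exists r. split; [exact Hr | left]. intros x y Hx Hy.
    destruct (Hsq x y Hx Hy) as [HU [Haxy Hdxy]]. destruct (Hprod x y HU) as [Hac' Hbd'].
    rewrite Rmult_comm in Hac'. repeat split; eauto.
Qed.

Lemma partial_y_zero_square phi dx dy x0 y0 r :
  0 < r ->
  (forall x y, Rabs (x - x0) < r -> Rabs (y - y0) < r ->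
     derivable_pt_lim (fun t => phi t y) x (dx x y) /\
     derivable_pt_lim (fun t => phi x t) y (dy x y)) ->
  (forall x y, Rabs (x - x0) < r -> Rabs (y - y0) < r -> dy x y = 0) ->
  forall x y, Rabs (x - x0) < r -> Rabs (y - y0) < r ->
    phi x y = phi x y0 /\ dx x y = dx x y0.
Proof.
  intros Hr Hd Hdy.
  assert (Hconst : forall x y, Rabs (x - x0) < r -> Rabs (y - y0) < r -> phi x y = phi x y0).
  { intros x y Hx Hy. apply (const_of_zero_deriv_ball y0 r (fun t => phi x t) Hr); auto.
    intros u Hu. rewrite <- (Hdy x u Hx Hu). apply Hd; auto. }
  intros x y Hx Hy. split; [auto |].
  assert (Hy0 := Rabs_center_lt y0 r Hr).
  apply (derivable_pt_lim_unique_ball x0 r (fun t => phi t y) (fun t => phi t y0) x); auto;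
    apply Hd; auto.
Qed.

Lemma partial_x_zero_square phi dx dy x0 y0 r :
  0 < r ->
  (forall x y, Rabs (x - x0) < r -> Rabs (y - y0) < r ->
     derivable_pt_lim (fun t => phi t y) x (dx x y) /\
     derivable_pt_lim (fun t => phi x t) y (dy x y)) ->
  (forall x y, Rabs (x - x0) < r -> Rabs (y - y0) < r -> dx x y = 0) ->
  forall x y, Rabs (x - x0) < r -> Rabs (y - y0) < r ->
    phi x y = phi x0 y /\ dy x y = dy x0 y.
Proof.
  intros Hr Hd Hdx x y Hx Hy.
  apply (partial_y_zero_square (fun s t => phi t s) (fun s t => dy t s) (fun s t => dx t s)
           y0 x0 r Hr); auto.
  intros s t Hs Ht. split; apply Hd; auto.
Qed.

Section LocalForm.

Variables (I : R -> Prop) (Y : R -> R) (k kt : R) (U : R -> R -> Prop).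
Variables (phi1 phi2 d1x d1y d2x d2y : R -> R -> R) (x0 y0 r : R).
Hypothesis HI : open_interval_without_0 I.
Hypothesis HY : forall s, I s -> derivable_pt_lim Y s (integrand s).
Hypotheses (hk : k <> 0) (hkt : kt <> 0) (Hr : 0 < r).
Hypothesis HUdom : forall x y, U x y -> dom I Y x y.
Hypothesis Himg : forall x y, U x y -> dom I Y (phi1 x y) (phi2 x y).
Hypothesis Hd1 : forall x y, U x y ->
  derivable_pt_lim (fun t => phi1 t y) x (d1x x y) /\
  derivable_pt_lim (fun t => phi1 x t) y (d1y x y).
Hypothesis Hd2 : forall x y, U x y ->
  derivable_pt_lim (fun t => phi2 t y) x (d2x x y) /\
  derivable_pt_lim (fun t => phi2 x t) y (d2y x y).
Hypothesis Hcross : forall x y, U x y ->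
  kt * (Y (phi2 x y) + phi1 x y) * (d1x x y * d2y x y + d1y x y * d2x x y) = k * (Y y + x).

Let Hx0 := Rabs_center_lt x0 r Hr.
Let Hy0 := Rabs_center_lt y0 r Hr.

Lemma local_diagonal_k_eq :
  (forall x y, Rabs (x - x0) < r -> Rabs (y - y0) < r -> U x y /\ d1y x y = 0 /\ d2x x y = 0) ->
  k = kt.
Proof.
  intros Hsq.
  assert (Hd1sq := fun x y Hx Hy => Hd1 x y (proj1 (Hsq x y Hx Hy))).
  assert (Hd2sq := fun x y Hx Hy => Hd2 x y (proj1 (Hsq x y Hx Hy))).
  apply (diag_k_eq_kt I Y k kt x0 y0 r (fun x => phi1 x y0) (fun x => d1x x y0)
           (fun y => phi2 x0 y) (fun y => d2y x0 y) HI HY hk hkt Hr).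
  - intros x Hx. apply Hd1sq; auto.
  - intros y Hy. apply Hd2sq; auto.
  - intros y Hy. destruct (Hsq x0 y Hx0 Hy) as [HU _].
    exact (conj (proj1 (HUdom x0 y HU)) (proj1 (Himg x0 y HU))).
  - intros x y Hx Hy. destruct (Hsq x y Hx Hy) as [HU [Hb Hc]].
    destruct (partial_y_zero_square phi1 d1x d1y x0 y0 r Hr Hd1sq
                (fun x y Hx Hy => proj1 (proj2 (Hsq x y Hx Hy))) x y Hx Hy) as [E1 E1'].
    destruct (partial_x_zero_square phi2 d2x d2y x0 y0 r Hr Hd2sq
                (fun x y Hx Hy => proj2 (proj2 (Hsq x y Hx Hy))) x y Hx Hy) as [E2 E2'].
    rewrite <- (Hcross x y HU), Hb, Hc, E1, E1', E2, E2'. ring.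
Qed.

Lemma local_antidiagonal_absurd :
  ~ (forall x y, Rabs (x - x0) < r -> Rabs (y - y0) < r -> U x y /\ d1x x y = 0 /\ d2y x y = 0).
Proof.
  intros Hsq.
  assert (Hd1sq := fun x y Hx Hy => Hd1 x y (proj1 (Hsq x y Hx Hy))).
  assert (Hd2sq := fun x y Hx Hy => Hd2 x y (proj1 (Hsq x y Hx Hy))).
  apply (antidiag_absurd I Y k kt x0 y0 r (fun y => phi1 x0 y) (fun y => d1y x0 y)
           (fun x => phi2 x y0) (fun x => d2x x y0) HI HY hk hkt Hr).
  - intros y Hy. apply Hd1sq; auto.
  - intros y Hy. exact (proj1 (HUdom x0 y (proj1 (Hsq x0 y Hx0 Hy)))).
  - intros x y Hx Hy. destruct (Hsq x y Hx Hy) as [HU [Ha Hd]].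
    destruct (partial_x_zero_square phi1 d1x d1y x0 y0 r Hr Hd1sq
                (fun x y Hx Hy => proj1 (proj2 (Hsq x y Hx Hy))) x y Hx Hy) as [E1 E1'].
    destruct (partial_y_zero_square phi2 d2x d2y x0 y0 r Hr Hd2sq
                (fun x y Hx Hy => proj2 (proj2 (Hsq x y Hx Hy))) x y Hx Hy) as [E2 E2'].
    rewrite <- (Hcross x y HU), Ha, Hd, E1, E1', E2, E2'. ring.
Qed.

End LocalForm.

Theorem lemma7p1
  (I : R -> Prop) (HI : open_interval_without_0 I)
  (Y : R -> R) (HY : forall s, I s -> derivable_pt_lim Y s (integrand s))
  (k kt : R) (hk : k <> 0) (hkt : kt <> 0)
  (U : R -> R -> Prop) (HUo : open2 U) (HUne : exists x y, U x y)
  (HUdom : forall x y, U x y -> dom I Y x y)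
  (phi1 phi2 : R -> R -> R)
  (Hs1 : smooth_on U phi1) (Hs2 : smooth_on U phi2)
  (d1x d1y d2x d2y : R -> R -> R)
  (Hd : forall x y, U x y ->
      derivable_pt_lim (fun t => phi1 t y) x (d1x x y) /\
      derivable_pt_lim (fun t => phi1 x t) y (d1y x y) /\
      derivable_pt_lim (fun t => phi2 t y) x (d2x x y) /\
      derivable_pt_lim (fun t => phi2 x t) y (d2y x y))
  (Hjac : forall x y, U x y -> d1x x y * d2y x y - d1y x y * d2x x y <> 0)
  (Himg : forall x y, U x y -> dom I Y (phi1 x y) (phi2 x y))
  (Hpull : forall x y, U x y -> forall u v : R * R,
      gk Y kt (phi1 x y) (phi2 x y)
         (jac_apply (d1x x y) (d1y x y) (d2x x y) (d2y x y) u)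
         (jac_apply (d1x x y) (d1y x y) (d2x x y) (d2y x y) v)
      = gk Y k x y u v) :
  k = kt.
Proof.
  assert (Hd1 : forall x y, U x y -> derivable_pt_lim (fun t => phi1 t y) x (d1x x y) /\
                                     derivable_pt_lim (fun t => phi1 x t) y (d1y x y))
    by (intros x y Hxy; apply Hd in Hxy; tauto).
  assert (Hd2 : forall x y, U x y -> derivable_pt_lim (fun t => phi2 t y) x (d2x x y) /\
                                     derivable_pt_lim (fun t => phi2 x t) y (d2y x y))
    by (intros x y Hxy; apply Hd in Hxy; tauto).
  assert (Hpt : forall x y, U x y ->
    (d1x x y * d2x x y = 0 /\ d1y x y * d2y x y = 0) /\
    kt * (Y (phi2 x y) + phi1 x y) * (d1x x y * d2y x y + d1y x y * d2x x y) = k * (Y y + x)).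
  { intros x y Hxy. apply gk_pullback_coeffs; [| apply Hpull, Hxy].
    destruct (Himg x y Hxy) as [_ Hn]. apply Rmult_integral_contrapositive_currified; auto. }
  destruct HUne as [x0 [y0 H0]].
  destruct (jacobian_diagonal_or_antidiagonal U phi1 phi2 d1x d1y d2x d2y x0 y0 HUo (Hs1 1%nat)
              (Hs2 1%nat) Hd1 Hd2 Hjac (fun x y Hxy => proj1 (Hpt x y Hxy)) H0)
    as [r [Hr [Hsq | Hsq]]].
  - exact (local_diagonal_k_eq I Y k kt U phi1 phi2 d1x d1y d2x d2y x0 y0 r HI HY hk hkt Hr
             HUdom Himg Hd1 Hd2 (fun x y Hxy => proj2 (Hpt x y Hxy)) Hsq).
  - destruct (local_antidiagonal_absurd I Y k kt U phi1 phi2 d1x d1y d2x d2y x0 y0 r HI HY hk hkt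
                Hr HUdom Hd1 Hd2 (fun x y Hxy => proj2 (Hpt x y Hxy)) Hsq).
Qed.
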